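(* Let $a<b$, $F:(a,b)\to\mathcal{K}(\mathbb{R}^n)$, $x_0\in(a,b)$, and suppose $F$ is strongly metrically differentiable at $x_0$, i.e. $F$ is metrically differentiable at $x_0$ and there are $L>0$ and a right neighborhood and a left neighborhood of $x_0$ such that $\sup_{y\in F(x_0)}\mathrm{haus}([x_0,x]^MF|_y,D^M_+F(x_0)|_y)\le L|x-x_0|$ for $x$ in the right neighborhood with $x>x_0$, and $\sup_{y\in F(x_0)}\mathrm{haus}([x_0,x]^MF|_y,D^M_-F(x_0)|_y)\le L|x-x_0|$ for $x$ in the left neighborhood with $x<x_0$. Then $\mathrm{haus}(F(x),L^MF(x))=O(|x-x_0|^2)$ as $x\to x_0$.
   Context: $\mathcal{K}(\mathbb{R}^n)$ is the set of nonempty compact subsets of $\mathbb{R}^n$, $|\cdot|$ the Euclidean norm, $\mathrm{dist}(x,A)=\min_{a\in A}|x-a|$, $\mathrm{haus}$ the Hausdorff distance. For $a\in\mathbb{R}^n$, $B\in\mathcal{K}(\mathbb{R}^n)$, $\Pi_B(a)=\{b\in B:|a-b|=\mathrm{dist}(a,B)\}$; for $A,B\in\mathcal{K}(\mathbb{R}^n)$, $\Pi(A,B)=\{(a,b)\in A\times B: a\in\Pi_A(b)\text{ or }b\in\Pi_B(a)\}$. For $x\ne x_0$, $y_0\in F(x_0)$: $[x_0,x]^MF|_{y_0}=\{\frac{y-y_0}{x-x_0}:(y_0,y)\in\Pi(F(x_0),F(x))\}$. $F$ is metrically differentiable from the right at $x_0$ if for every $y\in F(x_0)$ there is a nonempty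 set $D^M_+F(x_0)|_y$ with $\sup_{y\in F(x_0)}\mathrm{haus}(D^M_+F(x_0)|_y,[x_0,x]^MF|_y)\to0$ as $x\to x_0^+$; from the left analogously with $D^M_-F(x_0)|_y$ and $x\to x_0^-$; metrically differentiable means both. The local metric linear approximant is $L^MF(x)=\bigcup_{y\in F(x_0)}\big(\{y\}+(x-x_0)D^M_+F(x_0)|_y\big)$ for $x\ge x_0$ and $L^MF(x)=\bigcup_{y\in F(x_0)}\big(\{y\}+(x-x_0)D^M_-F(x_0)|_y\big)$ for $x<x_0$, where $\{c\}+\lambda A=\{c+\lambda a:a\in A\}$. *)

From HB Require Import structures.
From mathcomp Require Import all_boot all_order all_algebra.
From mathcomp Require Import all_classical all_reals all_analysis.
Set Implicit Arguments. Unset Strict Implicit. Unset Printing Implicit Defensive.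
Import Order.TTheory GRing.Theory Num.Theory numFieldNormedType.Exports.
Local Open Scope classical_set_scope.
Local Open Scope ring_scope.

Section Defs.
Variables (R : realType) (n : nat).
Notation V := 'rV[R]_n.

Definition enorm (v : V) : R := Num.sqrt (\sum_(i < n) (v ord0 i) ^+ 2).

Definition Kset (A : set V) : Prop := compact A /\ A !=set0.

Definition edist (x : V) (A : set V) : \bar R :=
  ereal_inf [set (enorm (x - a))%:E | a in A].

Definition haus (A B : set V) : \bar R :=
  Order.max (ereal_sup [set edist a B | a in A])
            (ereal_sup [set edist b A | b in B]).

Definition proj (a : V) (B : set V) : set V :=
  [set b | B b /\ (enorm (a - b))%:E = edist a B].

Definition Pi (A B : set V) : set (V * V) :=
  [set p | A p.1 /\ B p.2 /\ (proj p.2 A p.1 \/ proj p.1 B p.2)].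

Definition mquot (F : R -> set V) (x0 x : R) (y0 : V) : set V :=
  [set (x - x0)^-1 *: (y - y0) | y in [set y | Pi (F x0) (F x) (y0, y)]].

Definition supdev (F : R -> set V) (D : V -> set V) (x0 x : R) : \bar R :=
  ereal_sup [set haus (D y) (mquot F x0 x y) | y in F x0].

Definition LMF (F : R -> set V) (Dp Dm : V -> set V) (x0 x : R) : set V :=
  [set z | exists2 y, F x0 y &
     exists2 d, (if x0 <= x then Dp y else Dm y) d & z = y + (x - x0) *: d].

End Defs.

From Pilot Require Import Defs.
From HB Require Import structures.
From mathcomp Require Import all_boot all_order all_algebra.
From mathcomp Require Import all_classical all_reals all_analysis.
Set Implicit Arguments. Unset Strict Implicit. Unset Printing Implicit Defensive.
Import Order.TTheory GRing.Theory Num.Theory numFieldNormedType.Exports.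
Local Open Scope classical_set_scope.
Local Open Scope ring_scope.

(* Put h = x - x0 <> 0.  Each z in F(x) has a nearest point y in the compact set F(x0),
   so (y, z) lies in Pi(F(x0), F(x)) and (z - y)/h is a metric difference quotient at y;
   it is close to some d in D(y) up to haus(D(y), [x0,x]^M F|_y), and then z is close to
   y + h d in L^M F(x) up to |h| times that distance.  Conversely each y + h d is as close
   to a point z of F(x) whose quotient approximates d.  Hence
   haus(F(x), L^M F(x)) <= |h| sup_y haus(D(y), [x0,x]^M F|_y) <= L h^2, while at x = x0
   both sets are F(x0) because the derivatives are nonempty. *)

(* The qualified name [Defs.edist] avoids MathComp-Analysis' extended distance [edist]. *)

Section EuclideanDistance.
Variables (R : realType) (n : nat).
Notation V := 'rV[R]_n.
Implicit Types (u v x y : V) (A B : set V).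

Lemma enorm_continuous : continuous (@enorm R n).
Proof.
move=> v; apply: (@continuous_comp _ _ _ (fun w : V => \sum_(i < n) w ord0 i ^+ 2));
  last exact: sqrt_continuous.
apply: (continuous_big add_continuous) => i _ w.
apply: (@continuous_comp _ _ _ (fun w : V => w ord0 i) (fun t : R => t ^+ 2)).
  exact: coord_continuous.
exact: exprn_continuous.
Qed.

Lemma enormZ (c : R) v : enorm (c *: v) = `|c| * enorm v.
Proof.
rewrite /enorm; under eq_bigr do rewrite mxE exprMn.
by rewrite -mulr_sumr sqrtrM ?sqr_ge0 // sqrtr_sqr.
Qed.

Lemma enorm0 : enorm (0 : V) = 0.
Proof. by rewrite -(scale0r (0 : V)) enormZ normr0 mul0r. Qed.

Lemma enormB u v : enorm (u - v) = enorm (v - u).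
Proof. by rewrite -opprB -scaleN1r enormZ normrN1 mul1r. Qed.

Lemma edist_le_enorm x A a : A a -> (Defs.edist x A <= (enorm (x - a))%:E)%E.
Proof. by move=> Aa; apply: ereal_inf_lbound; exists a. Qed.

Lemma edist_attained x A : Kset A ->
  exists2 y, A y & Defs.edist x A = (enorm (x - y))%:E.
Proof.
move=> [cA A0].
have dist_cont : {within A, continuous (fun v : V => enorm (x - v))}.
  apply: continuous_subspaceT => v.
  apply: (@continuous_comp _ _ _ (fun w : V => x - w)); last exact: enorm_continuous.
  exact: (@continuousB _ _ _ (fun=> x) id v (@cst_continuous _ _ x v) cvg_id).
have [y /[!inE] Ay ymin] := compact_EVT_min A0 cA dist_cont.
exists y => //; apply/eqP; rewrite eq_le edist_le_enorm //=.
by apply: le_ereal_inf_tmp => _ [a Aa <-]; rewrite lee_fin ymin ?inE.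
Qed.

Lemma edist_lt_enorm x A (r : R) :
  (Defs.edist x A < r%:E)%E -> exists2 a, A a & enorm (x - a) < r.
Proof. by move=> /ereal_inf_lt[_ [a Aa <-]]; rewrite lte_fin; exists a. Qed.

Lemma edist_le_approx x A (c r : R) : 0 < c ->
  (forall e, 0 < e -> exists2 a, A a & enorm (x - a) <= c * (r + e)) ->
  (Defs.edist x A <= (c * r)%:E)%E.
Proof.
move=> c0 near; apply/lee_addgt0Pr => e e0.
have [a Aa xa] := near (e / c) (divr_gt0 e0 c0).
apply: le_trans (edist_le_enorm x Aa) _.
by rewrite lee_fin (le_trans xa) // mulrDr mulrCA divff ?mulr1 ?gt_eqF.
Qed.

Lemma hausC A B : haus A B = haus B A.
Proof. exact: maxC. Qed.

Lemma edist_le_haus A B a : A a -> (Defs.edist a B <= haus A B)%E.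
Proof. by move=> Aa; rewrite le_max ereal_sup_ubound //; exists a. Qed.

Lemma haus_le A B (r : \bar R) :
  (forall a, A a -> (Defs.edist a B <= r)%E) ->
  (forall b, B b -> (Defs.edist b A <= r)%E) ->
  (haus A B <= r)%E.
Proof.
by move=> AB BA; rewrite ge_max; apply/andP; split; apply: ge_ereal_sup => _ [? ? <-]; auto.
Qed.

Lemma haus_xx_le0 A : (haus A A <= 0)%E.
Proof.
by apply: haus_le => a Aa; apply: le_trans (edist_le_enorm a Aa) _; rewrite subrr enorm0.
Qed.

End EuclideanDistance.

Section MetricLinearApproximation.
Variables (R : realType) (n : nat) (F : R -> set 'rV[R]_n) (x0 : R).
Notation V := 'rV[R]_n.
Implicit Types (D : V -> set V) (x : R) (y z d : V).

Definition lin_approx D x : set V :=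
  [set w | exists2 y, F x0 y & exists2 d, D y d & w = y + (x - x0) *: d].

Lemma LMF_right Dp Dm x : x0 <= x -> LMF F Dp Dm x0 x = lin_approx Dp x.
Proof. by rewrite /LMF => ->. Qed.

Lemma LMF_left Dp Dm x : x < x0 -> LMF F Dp Dm x0 x = lin_approx Dm x.
Proof. by rewrite /LMF leNgt => ->. Qed.

Lemma lin_approx_at_x0 D :
  (forall y, F x0 y -> D y !=set0) -> lin_approx D x0 = F x0.
Proof.
move=> Dne; rewrite eqEsubset; split => [_ [y Fy [d _ ->]]|y Fy].
  by rewrite subrr scale0r addr0.
by have [d Dd] := Dne y Fy; exists y => //; exists d => //; rewrite subrr scale0r addr0.
Qed.

Lemma haus_le_supdev D x y :
  F x0 y -> (haus (D y) (mquot F x0 x y) <= supdev F D x0 x)%E.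
Proof. by move=> Fy; apply: ereal_sup_ubound; exists y. Qed.

Lemma enorm_shift (h : R) y z d : h != 0 ->
  enorm (y + h *: d - z) = `|h| * enorm (d - h^-1 *: (z - y)).
Proof.
move=> h0; rewrite -enormZ scalerBr scalerA divff // scale1r.
by congr enorm; rewrite opprB addrA (addrC y).
Qed.

Lemma haus_lin_approx_le D x (r : R) : x != x0 -> Kset (F x0) ->
  (supdev F D x0 x <= r%:E)%E ->
  (haus (F x) (lin_approx D x) <= (`|x - x0| * r)%:E)%E.
Proof.
move=> xx0 K0 dev_r; set h := x - x0.
have h0 : h != 0 by rewrite subr_eq0.
have habs0 : 0 < `|h| by rewrite normr_gt0.
have dev_y y : F x0 y -> (haus (D y) (mquot F x0 x y) <= r%:E)%E.
  by move=> Fy; apply: le_trans (haus_le_supdev D x Fy) dev_r.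
apply: haus_le => [z Fz|_ [y Fy [d Dd ->]]]; apply: edist_le_approx => // e e0;
  have r_re : (r%:E < (r + e)%:E)%E by rewrite lte_fin ltrDl.
- have [y Fy zy] := edist_attained z K0.
  have Mq : mquot F x0 x y (h^-1 *: (z - y)).
    by exists z => //; do 2!split => //; left; split; rewrite ?zy.
  have qD : (Defs.edist (h^-1 *: (z - y)) (D y) <= r%:E)%E.
    by apply: le_trans (dev_y y Fy); rewrite hausC; exact: edist_le_haus.
  have [d Dd qd] := edist_lt_enorm (le_lt_trans qD r_re).
  exists (y + h *: d); first by exists y => //; exists d.
  by rewrite enormB enorm_shift // enormB ler_pM2l // ltW.
- have dM := le_trans (edist_le_haus _ Dd) (dev_y y Fy).
  have [_ [z [_ [Fz _]] <-] dq] := edist_lt_enorm (le_lt_trans dM r_re).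
  by exists z => //; rewrite enorm_shift // ler_pM2l // ltW.
Qed.

End MetricLinearApproximation.

Theorem mainTheorem4 (R : realType) (n : nat) (a b : R)
  (F : R -> set 'rV[R]_n) (x0 : R) (Dp Dm : 'rV[R]_n -> set 'rV[R]_n) :
  a < b ->
  (forall x, a < x < b -> Kset (F x)) ->
  a < x0 < b ->
  (* metric differentiability at x0 (from the right and from the left) *)
  (forall y, F x0 y -> Dp y !=set0) ->
  (forall y, F x0 y -> Dm y !=set0) ->
  (forall eps : R, 0 < eps -> exists2 delta : R, 0 < delta &
     forall x, x0 < x < b -> x - x0 < delta ->
       (supdev F Dp x0 x <= eps%:E)%E) ->
  (forall eps : R, 0 < eps -> exists2 delta : R, 0 < delta &
     forall x, a < x < x0 -> x0 - x < delta ->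
       (supdev F Dm x0 x <= eps%:E)%E) ->
  (* strong metric differentiability: Lipschitz-type bounds *)
  (exists L : R, 0 < L /\ exists2 delta : R, 0 < delta &
     (forall x, x0 < x < b -> x - x0 < delta ->
        (supdev F Dp x0 x <= (L * `|x - x0|)%:E)%E) /\
     (forall x, a < x < x0 -> x0 - x < delta ->
        (supdev F Dm x0 x <= (L * `|x - x0|)%:E)%E)) ->
  (* conclusion: haus(F x, L^M F(x)) = O(|x - x0|^2) as x -> x0 *)
  exists C : R, exists2 delta : R, 0 < delta &
    forall x, a < x < b -> `|x - x0| < delta ->
      (haus (F x) (LMF F Dp Dm x0 x) <= (C * `|x - x0| ^+ 2)%:E)%E.
Proof.
move=> _ KF /andP[ax0 x0b] Dp_ne _ _ _ [L [_ [delta delta0 [dev_right dev_left]]]].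
have K0 : Kset (F x0) by apply: KF; rewrite ax0.
have haus_quadratic D x : x != x0 -> (supdev F D x0 x <= (L * `|x - x0|)%:E)%E ->
    (haus (F x) (lin_approx F x0 D x) <= (L * `|x - x0| ^+ 2)%:E)%E.
  move=> xx0 dev; apply: le_trans (haus_lin_approx_le xx0 K0 dev) _.
  by rewrite lee_fin mulrCA expr2.
exists L, delta => // x /andP[ax xb].
case: (ltgtP x x0) => [xx0|x0x|->] dx.
- rewrite LMF_left //; apply: haus_quadratic; first by rewrite lt_eqF.
  apply: dev_left; first by rewrite ax.
  by rewrite -normrN opprB gtr0_norm ?subr_gt0 in dx.
- rewrite (LMF_right _ _ _ (ltW x0x)); apply: haus_quadratic; first by rewrite gt_eqF.
  apply: dev_right; first by rewrite x0x.
  by rewrite gtr0_norm ?subr_gt0 in dx.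
- rewrite LMF_right // (lin_approx_at_x0 Dp_ne) subrr normr0 expr0n mulr0.
  exact: haus_xx_le0.
Qed.
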